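(* Let $L:\mathbb{R}^n\times\mathbb{R}^n\to\mathbb{R}$ be smooth and $\tau>0$. Consider the midpoint scheme (Lagrangian form) $$\frac{p_{k+1}-p_k}{\tau}=D_1L\Big(\frac{q_{k+1}+q_k}{2},\frac{q_{k+1}-q_k}{\tau}\Big),\qquad \frac{p_{k+1}+p_k}{2}=D_2L\Big(\frac{q_{k+1}+q_k}{2},\frac{q_{k+1}-q_k}{\tau}\Big).$$ Let $W\subset\mathbb{R}^{2n}$ be open and $F:W\to\mathbb{R}^{2n}$ smooth such that for every $(q_k,p_k)\in W$, $(q_{k+1},p_{k+1})=F(q_k,p_k)$ satisfies these equations. Then $F$ is symplectic: $F^*\big(\sum_i dp_i\wedge dq^i\big)=\sum_i dp_i\wedge dq^i$.
   Context: $D_1L$, $D_2L$ denote the partial derivatives of $L(q,v)$ with respect to $q$ and $v$. *)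

From HB Require Import structures.
From mathcomp Require Import all_boot all_order all_algebra.
From mathcomp Require Import all_classical all_reals all_analysis.
Set Implicit Arguments. Unset Strict Implicit. Unset Printing Implicit Defensive.
Import Order.TTheory GRing.Theory Num.Theory.
Import numFieldNormedType.Exports.
Local Open Scope classical_set_scope.
Local Open Scope ring_scope.

Fixpoint iterD (R : realType) (V W : normedModType R) (vs : seq V) (f : V -> W)
  : V -> W :=
  match vs with
  | [::] => f
  | v :: vs' => fun x => 'D_v (iterD vs' f) x
  end.

Definition smooth_on (R : realType) (V W : normedModType R) (U : set V)
  (f : V -> W) : Prop :=
  forall (vs : seq V) (x : V), U x -> differentiable (iterD vs f) x.

Definition ebasis (R : realType) (n : nat) (i : 'I_n) : 'rV[R]_n :=
  delta_mx 0 i.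

Definition D1L (R : realType) (n : nat) (L : 'rV[R]_n * 'rV[R]_n -> R)
  (q v : 'rV[R]_n) : 'rV[R]_n :=
  \row_i 'D_(ebasis R i, 0) L (q, v).
Definition D2L (R : realType) (n : nat) (L : 'rV[R]_n * 'rV[R]_n -> R)
  (q v : 'rV[R]_n) : 'rV[R]_n :=
  \row_i 'D_(0, ebasis R i) L (q, v).

Definition midpoint_step (R : realType) (n : nat) (L : 'rV[R]_n * 'rV[R]_n -> R)
  (tau : R) (q0 p0 q1 p1 : 'rV[R]_n) : Prop :=
  let qm := (2%:R)^-1 *: (q1 + q0) in
  let vm := tau^-1 *: (q1 - q0) in
  tau^-1 *: (p1 - p0) = D1L L qm vm /\
  (2%:R)^-1 *: (p1 + p0) = D2L L qm vm.

(* the 2-form omega = sum_i dp_i /\ dq^i on tangent vectors (dq,dp) *)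
Definition omega (R : realType) (n : nat) (u w : 'rV[R]_n * 'rV[R]_n) : R :=
  \sum_(i < n) (u.2 0 i * w.1 0 i - w.2 0 i * u.1 0 i).

From HB Require Import structures.
From mathcomp Require Import all_boot all_order all_algebra.
From mathcomp Require Import all_classical all_reals all_analysis.
From mathcomp Require Import ring lra.
Import Order.TTheory GRing.Theory Num.Theory.
Import numFieldNormedType.Exports.
Local Open Scope classical_set_scope.
Local Open Scope ring_scope.

(* Write G z = ((q0 + q1) / 2, (q1 - q0) / tau) for the point at which the
   scheme evaluates the partial derivatives of L, where (q0, p0) = z and
   (q1, p1) = F z. Near every point of W the scheme says that
   ((p1 - p0) / tau, (p1 + p0) / 2) is the gradient of L at G z.
   Differentiating along tangent vectors u and w, the momentum components of
   dF u become the derivatives of the gradient of L along dG u, and a discrete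
   Leibniz rule turns omega (dF u) (dF w) - omega u w into
   tau (D_{dG u} D_{dG w} L - D_{dG w} D_{dG u} L) at G x. This vanishes by the
   symmetry of second derivatives, proved from the mean value theorem applied
   to second differences. *)

Section SecondDerivativesCommute.
Context {R : realType} {V : normedModType R}.

Lemma is_derive_along_line (W : normedModType R) (g : V -> W) (y v : V) (t : R) :
  derivable g (y + t *: v) v ->
  is_derive t (1 : R) (fun s : R => g (y + s *: v)) ('D_v g (y + t *: v)).
Proof.
have quotE : (fun h : R => h^-1 *: (g (y + (h *: 1 + t) *: v) - g (y + t *: v)))
    = (fun h : R => h^-1 *: (g (h *: v + (y + t *: v)) - g (y + t *: v))).
  by apply/funext => h; rewrite scaler1 scalerDl addrCA.
by move=> dg; split; rewrite /derive /derivable /= quotE.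
Qed.

Lemma mvt_along_line (g : V -> R) (y v : V) (s : R) :
  (forall z, differentiable g z) -> 0 < s ->
  exists2 c, 0 < c < s & g (y + s *: v) - g y = 'D_v g (y + c *: v) * s.
Proof.
move=> dg s0.
have line_cont : {within `[0, s], continuous (fun r : R => g (y + r *: v))}.
  apply: continuous_subspaceT => t.
  apply: differentiable_continuous; apply: differentiable_comp; last exact: dg.
  exact: ex_diff.
have line_derive t : is_derive t (1 : R) (fun r => g (y + r *: v)) ('D_v g (y + t *: v)).
  exact/is_derive_along_line/diff_derivable.
have [c /[!in_itv]/= c0s gE] := MVT s0 (fun t _ => line_derive t) line_cont.
by exists c => //; move: gE; rewrite scale0r addr0 subr0.
Qed.

Lemma derive_shift (W : normedModType R) (f : V -> W) (c z h : V) :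
  'D_h (fun y => f (y + c)) z = 'D_h f (z + c).
Proof.
rewrite /derive.
have -> : (fun y => f (y + c)) \o shift z = f \o shift (z + c).
  by apply/funext => t; rewrite /= addrA.
by [].
Qed.

Definition second_difference (f : V -> R) (x h k : V) (s : R) : R :=
  f (x + s *: h + s *: k) - f (x + s *: h) - f (x + s *: k) + f x.

Lemma second_differenceC (f : V -> R) (x h k : V) :
  second_difference f x h k = second_difference f x k h.
Proof.
by apply/funext => s; rewrite /second_difference (addrAC x) (addrAC (f _)).
Qed.

Lemma second_difference_mvt (f : V -> R) (x h k : V) (s : R) :
  (forall y, differentiable f y) -> (forall a y, differentiable ('D_a f) y) ->
  0 < s -> exists c1 c2, [/\ 0 < c1 < s, 0 < c2 < s &
    second_difference f x h k s = 'D_k ('D_h f) (x + c1 *: h + c2 *: k) * (s * s)].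
Proof.
move=> df dDf s0.
pose g z := f (z + s *: k) - f z.
have df_shift z : differentiable (fun y => f (y + s *: k)) z.
  by apply: differentiable_comp; [exact: ex_diff | exact: df].
have dg z : differentiable g z by apply: differentiableB.
have Dg z : 'D_h g z = 'D_h f (z + s *: k) - 'D_h f z.
  by rewrite deriveB ?derive_shift //; exact: diff_derivable.
have [c1 c1s E1] := mvt_along_line g x h s dg s0.
have [c2 c2s E2] := mvt_along_line _ (x + c1 *: h) k s (dDf h) s0.
exists c1, c2; split => //.
by rewrite mulrA -E2 -Dg -E1 /g /second_difference; ring.
Qed.

Lemma second_difference_cvg (f : V -> R) (x h k : V) :
  (forall y, differentiable f y) -> (forall a y, differentiable ('D_a f) y) ->
  {for x, continuous ('D_k ('D_h f))} ->
  (fun s => second_difference f x h k s / (s * s)) @ 0^'+ --> 'D_k ('D_h f) x.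
Proof.
move=> df dDf cont; apply/cvgrPdist_lt => e e0.
have [d /= d0 near_x] := (nbhs_normP _ _).1 ((cvgrPdist_lt _ _).1 cont e e0).
pose r := `|h| + `|k| + 1.
have r0 : 0 < r by rewrite ltr_wpDl ?addr_ge0.
near=> s.
have s0 : 0 < s by near: s; exact: nbhs_right_gt.
have sr : s < d / r by near: s; apply: nbhs_right_lt; rewrite divr_gt0.
have [c1 [c2 [/andP[c10 c1s] /andP[c20 c2s] ->]]] :=
  second_difference_mvt f x h k s df dDf s0.
rewrite mulfK ?mulf_neq0 ?gt_eqF //; apply: near_x => /=.
have -> : x - (x + c1 *: h + c2 *: k) = - (c1 *: h + c2 *: k).
  by rewrite -addrA opprD addrA subrr sub0r.
rewrite normrN (le_lt_trans (ler_normD _ _)) // !normrZ !gtr0_norm //.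
move: sr; rewrite ltr_pdivlMr // /r => sr.
have := normr_ge0 h; have := normr_ge0 k; nra.
Unshelve. all: by end_near. Qed.

Lemma derive2C (f : V -> R) (x h k : V) :
  (forall y, differentiable f y) -> (forall a y, differentiable ('D_a f) y) ->
  {for x, continuous ('D_k ('D_h f))} -> {for x, continuous ('D_h ('D_k f))} ->
  'D_k ('D_h f) x = 'D_h ('D_k f) x.
Proof.
move=> df dDf ckh chk.
have cvg_kh := second_difference_cvg f x h k df dDf ckh.
have := second_difference_cvg f x k h df dDf chk.
rewrite -second_differenceC => cvg_hk.
exact: cvg_unique cvg_kh cvg_hk.
Qed.

End SecondDerivativesCommute.

Section DirectionalDerivatives.
Context {R : numFieldType}.

Lemma derive_comp (U V W : normedModType R) (f : U -> V) (g : V -> W) x v :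
  differentiable f x -> differentiable g (f x) ->
  'D_v (g \o f) x = 'D_('D_v f x) g (f x).
Proof.
move=> df dg; rewrite deriveE; last exact: differentiable_comp.
by rewrite diff_comp // !deriveE.
Qed.

Lemma derive_pair (U V W : normedModType R) (f : U -> V) (g : U -> W) x v :
  differentiable f x -> differentiable g x ->
  'D_v (fun z => (f z, g z)) x = ('D_v f x, 'D_v g x).
Proof.
move=> df dg; rewrite deriveE; last exact: differentiable_pair.
by rewrite diff_pair // !deriveE.
Qed.

Section ContinuousLinearMap.
Context {V W : normedModType R} {g : V -> W}.
Hypotheses (g_linear : linear g) (g_cont : continuous g).

Let gL : {linear V -> W} := HB.pack g (GRing.isLinear.Build _ _ _ _ _ g_linear).

Let differentiable_g y : differentiable g y.
Proof. by rewrite -[g]/(gL : _ -> _); apply: linear_differentiable. Qed.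

Lemma differentiable_linear_comp (U : normedModType R) (f : U -> V) x :
  differentiable f x -> differentiable (g \o f) x.
Proof. by move=> df; apply: differentiable_comp. Qed.

Lemma derive_linear_comp (U : normedModType R) (f : U -> V) x v :
  differentiable f x -> 'D_v (g \o f) x = g ('D_v f x).
Proof.
by move=> df; rewrite derive_comp // deriveE // -[g]/(gL : _ -> _) diff_lin.
Qed.

End ContinuousLinearMap.

Context {U V W : normedModType R}.

Lemma fst_continuous : continuous (@fst V W).
Proof. by move=> ?; exact: cvg_fst. Qed.

Lemma snd_continuous : continuous (@snd V W).
Proof. by move=> ?; exact: cvg_snd. Qed.

Lemma differentiable_fst (f : U -> V * W) x :
  differentiable f x -> differentiable (fun z => (f z).1) x.
Proof. by apply: (differentiable_linear_comp _ fst_continuous). Qed.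

Lemma differentiable_snd (f : U -> V * W) x :
  differentiable f x -> differentiable (fun z => (f z).2) x.
Proof. by apply: (differentiable_linear_comp _ snd_continuous). Qed.

Lemma derive_fst (f : U -> V * W) x v :
  differentiable f x -> 'D_v (fun z => (f z).1) x = ('D_v f x).1.
Proof. by apply: (derive_linear_comp _ fst_continuous). Qed.

Lemma derive_snd (f : U -> V * W) x v :
  differentiable f x -> 'D_v (fun z => (f z).2) x = ('D_v f x).2.
Proof. by apply: (derive_linear_comp _ snd_continuous). Qed.

Lemma derive_coord m p (f : U -> 'M[R]_(m, p)) i j x v :
  differentiable f x -> 'D_v (fun z => f z i j) x = 'D_v f x i j.
Proof.
apply: (derive_linear_comp (g := fun M : 'M[R]_(m, p) => M i j)).
  by move=> a M N; rewrite !mxE.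
exact: coord_continuous.
Qed.

End DirectionalDerivatives.

Definition mean {R : numFieldType} {V : lmodType R} (a b : V) : V :=
  2^-1 *: (b + a).

Definition slope {R : numFieldType} {V : lmodType R} (tau : R) (a b : V) : V :=
  tau^-1 *: (b - a).

Section MeanSlope.
Context {R : numFieldType} {U V : normedModType R}.
Variables (tau : R) (f g : U -> V) (x : U).
Hypotheses (df : differentiable f x) (dg : differentiable g x).

Lemma differentiable_mean : differentiable (fun z => mean (f z) (g z)) x.
Proof. exact/differentiableZ/differentiableD. Qed.

Lemma differentiable_slope : differentiable (fun z => slope tau (f z) (g z)) x.
Proof. exact/differentiableZ/differentiableB. Qed.

Let dfv v : derivable f x v := diff_derivable df.
Let dgv v : derivable g x v := diff_derivable dg.

Lemma derive_mean v :
  'D_v (fun z => mean (f z) (g z)) x = mean ('D_v f x) ('D_v g x).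
Proof.
by rewrite (deriveZ (f := g + f)) ?deriveD //; exact: derivableD.
Qed.

Lemma derive_slope v :
  'D_v (fun z => slope tau (f z) (g z)) x = slope tau ('D_v f x) ('D_v g x).
Proof.
by rewrite (deriveZ (f := g - f)) ?deriveB //; exact: derivableB.
Qed.

End MeanSlope.

Definition mean_slope {R : numFieldType} {V : lmodType R} (tau : R) (a b : V) : V * V :=
  (mean a b, slope tau a b).

Definition slope_mean {R : numFieldType} {V : lmodType R} (tau : R) (a b : V) : V * V :=
  (slope tau a b, mean a b).

Definition pairing {R : pzRingType} {n : nat} (h m : 'rV[R]_n * 'rV[R]_n) : R :=
  \sum_(i < n) (h.1 0 i * m.1 0 i + h.2 0 i * m.2 0 i).

(* Coordinatewise this is the discrete Leibniz rule
   b1 a1 - b0 a0 = tau (mean a0 a1 * slope tau b0 b1 + slope tau a0 a1 * mean b0 b1). *)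
Lemma omega_mean_slope {R : realType} {n : nat} (tau : R)
    (u u' w w' : 'rV[R]_n * 'rV[R]_n) :
  tau != 0 ->
  omega u' w' - omega u w =
  tau * (pairing (mean_slope tau w.1 w'.1) (slope_mean tau u.2 u'.2)
       - pairing (mean_slope tau u.1 u'.1) (slope_mean tau w.2 w'.2)).
Proof.
move=> tau0; rewrite /omega /pairing -!sumrB mulr_sumr; apply: eq_bigr => i _.
by rewrite /= /mean /slope !mxE; field.
Qed.

Section SecondDerivativesOnPairs.
Context {R : realType} {n : nat}.

Lemma pair_sum_ebasis (k : 'rV[R]_n * 'rV[R]_n) :
  k = \sum_(i < n) (k.1 0 i *: (ebasis R i, 0) + k.2 0 i *: (0, ebasis R i)).
Proof.
have sum_fst := big_morph (@fst 'rV[R]_n 'rV[R]_n)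
  (id1 := 0) (op1 := +%R) (id2 := 0) (op2 := +%R) (fun a b => erefl) erefl.
have sum_snd := big_morph (@snd 'rV[R]_n 'rV[R]_n)
  (id1 := 0) (op1 := +%R) (id2 := 0) (op2 := +%R) (fun a b => erefl) erefl.
apply: injective_projections.
  rewrite sum_fst [LHS]row_sum_delta; apply: eq_bigr => i _.
  by rewrite -[RHS]/(k.1 0 i *: ebasis R i + k.2 0 i *: 0) scaler0 addr0.
rewrite sum_snd [LHS]row_sum_delta; apply: eq_bigr => i _.
by rewrite -[RHS]/(k.1 0 i *: 0 + k.2 0 i *: ebasis R i) scaler0 add0r.
Qed.

Lemma deriveE_partials (W : normedModType R) (f : 'rV[R]_n * 'rV[R]_n -> W) y k :
  differentiable f y ->
  'D_k f y = \sum_(i < n)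
    (k.1 0 i *: 'D_(ebasis R i, 0) f y + k.2 0 i *: 'D_(0, ebasis R i) f y).
Proof.
move=> df; rewrite deriveE // {1}[k]pair_sum_ebasis linear_sum.
by apply: eq_bigr => i _; rewrite linearD !linearZ -!(deriveE _ df).
Qed.

Definition dgrad (L : 'rV[R]_n * 'rV[R]_n -> R) (h y : 'rV[R]_n * 'rV[R]_n) :
  'rV[R]_n * 'rV[R]_n :=
  (\row_i 'D_h ('D_(ebasis R i, 0) L) y, \row_i 'D_h ('D_(0, ebasis R i) L) y).

Lemma derive2_pairing (L : 'rV[R]_n * 'rV[R]_n -> R) (h k y : 'rV[R]_n * 'rV[R]_n) :
  (forall z, differentiable L z) -> (forall a z, differentiable ('D_a L) z) ->
  'D_h ('D_k L) y = pairing k (dgrad L h y).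
Proof.
move=> dL dDL; transitivity (\sum_(i < n)
    (k.1 0 i * 'D_h ('D_(ebasis R i, 0) L) y + k.2 0 i * 'D_h ('D_(0, ebasis R i) L) y));
  last by apply: eq_bigr => i _; congr (_ * _ + _ * _); apply/esym/mxE.
have -> : 'D_k L = \sum_(i < n)
    (k.1 0 i \*: 'D_(ebasis R i, 0) L + k.2 0 i \*: 'D_(0, ebasis R i) L).
  by apply/funext => z; rewrite deriveE_partials // fct_sumE.
have dDLv a v z : derivable ('D_a L) z v := diff_derivable (dDL a z).
have dDLkv c a v z : derivable (c \*: 'D_a L) z v by apply: derivableZ.
rewrite derive_sum => [|i]; last exact: derivableD.
by apply: eq_bigr => i _; rewrite deriveD ?deriveZ.
Qed.

End SecondDerivativesOnPairs.

Section LinearizedMidpointScheme.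
Context {R : realType} {n : nat} {L : 'rV[R]_n * 'rV[R]_n -> R} {tau : R}
  {F : 'rV[R]_n * 'rV[R]_n -> 'rV[R]_n * 'rV[R]_n} {x : 'rV[R]_n * 'rV[R]_n}.
Hypotheses (dL : forall y, differentiable L y)
  (dDL : forall a y, differentiable ('D_a L) y) (dF : differentiable F x)
  (step : \forall z \near x, midpoint_step L tau z.1 z.2 (F z).1 (F z).2).

Let G z := mean_slope tau z.1 (F z).1.

Let d_id : differentiable (@id ('rV[R]_n * 'rV[R]_n)) x.
Proof. exact: ex_diff. Qed.

Let d_fst : differentiable (fun z : 'rV[R]_n * 'rV[R]_n => z.1) x.
Proof. exact: (@differentiable_fst R _ 'rV[R]_n 'rV[R]_n id x d_id). Qed.

Let d_F1 : differentiable (fun z => (F z).1) x.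
Proof. exact: differentiable_fst. Qed.

Let d_G : differentiable G x.
Proof.
by apply: differentiable_pair; [exact: differentiable_mean | exact: differentiable_slope].
Qed.

Lemma derive_midpoint_argument u : 'D_u G x = mean_slope tau u.1 ('D_u F x).1.
Proof.
rewrite derive_pair ?derive_mean ?derive_slope //; last 2 first.
- exact: differentiable_mean.
- exact: differentiable_slope.
by rewrite (@derive_fst R _ 'rV[R]_n 'rV[R]_n id) // derive_fst // derive_id.
Qed.

Let P z := slope_mean tau z.2 (F z).2.

Let d_snd : differentiable (fun z : 'rV[R]_n * 'rV[R]_n => z.2) x.
Proof. exact: (@differentiable_snd R _ 'rV[R]_n 'rV[R]_n id x d_id). Qed.

Let d_F2 : differentiable (fun z => (F z).2) x.
Proof. exact: differentiable_snd. Qed.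

Let d_P : differentiable P x.
Proof.
by apply: differentiable_pair; [exact: differentiable_slope | exact: differentiable_mean].
Qed.

Let derive_P u : 'D_u P x = slope_mean tau u.2 ('D_u F x).2.
Proof.
rewrite derive_pair ?derive_mean ?derive_slope //; last 2 first.
- exact: differentiable_slope.
- exact: differentiable_mean.
by rewrite (@derive_snd R _ 'rV[R]_n 'rV[R]_n id) // derive_snd // derive_id.
Qed.

Let derive_entry_near (p : 'rV[R]_n * 'rV[R]_n -> 'rV[R]_n) a i u :
  differentiable p x -> (\forall z \near x, p z 0 i = 'D_a L (G z)) ->
  'D_u p x 0 i = 'D_('D_u G x) ('D_a L) (G x).
Proof.
move=> dp near_eq; rewrite -derive_coord // (near_eq_derive u near_eq).
exact: derive_comp.
Qed.

Lemma linearized_midpoint_step u :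
  slope_mean tau u.2 ('D_u F x).2 = dgrad L ('D_u G x) (G x).
Proof.
rewrite -derive_P; apply: injective_projections; apply/rowP => i; rewrite [RHS]mxE.
- rewrite -derive_fst //; apply: derive_entry_near; first exact: differentiable_fst.
  apply: filterS step => z [+ _].
  by move=> /(congr1 (fun M : 'rV[R]_n => M 0 i)) ->; exact: mxE.
- rewrite -derive_snd //; apply: derive_entry_near; first exact: differentiable_snd.
  apply: filterS step => z [_ +].
  by move=> /(congr1 (fun M : 'rV[R]_n => M 0 i)) ->; exact: mxE.
Qed.

Hypothesis tau_neq0 : tau != 0.

Lemma omega_linearized_step u w :
  omega ('D_u F x) ('D_w F x) - omega u w =
  tau * ('D_('D_u G x) ('D_('D_w G x) L) (G x)
         - 'D_('D_w G x) ('D_('D_u G x) L) (G x)).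
Proof.
rewrite (omega_mean_slope _ _ _ _ _ tau_neq0) -!derive_midpoint_argument.
rewrite !linearized_midpoint_step.
by congr (_ * (_ - _)); symmetry; exact: derive2_pairing.
Qed.

End LinearizedMidpointScheme.

Theorem mainTheorem3 (R : realType) (n : nat)
  (L : 'rV[R]_n * 'rV[R]_n -> R) (tau : R)
  (W : set ('rV[R]_n * 'rV[R]_n)) (F : 'rV[R]_n * 'rV[R]_n -> 'rV[R]_n * 'rV[R]_n) :
  smooth_on setT L -> 0 < tau -> open W -> smooth_on W F ->
  (forall x : 'rV[R]_n * 'rV[R]_n, W x ->
     midpoint_step L tau x.1 x.2 (F x).1 (F x).2) ->
  forall x : 'rV[R]_n * 'rV[R]_n, W x ->
    forall u w : 'rV[R]_n * 'rV[R]_n,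
      omega ('d F x u) ('d F x w) = omega u w.
Proof.
move=> sL tau_gt0 oW sF step x Wx u w.
have dL y : differentiable L y := sL [::] y Logic.I.
have dDL a y : differentiable ('D_a L) y := sL [:: a] y Logic.I.
have cDDL a b y : {for y, continuous ('D_a ('D_b L))} :=
  differentiable_continuous (sL [:: a; b] y Logic.I).
have dF : differentiable F x := sF [::] x Wx.
have nearW : \forall z \near x, W z by apply: oW.
have step_near : \forall z \near x, midpoint_step L tau z.1 z.2 (F z).1 (F z).2.
  exact: filterS step nearW.
apply/eqP; rewrite -!deriveE // -subr_eq0.
rewrite (omega_linearized_step dL dDL dF step_near (lt0r_neq0 tau_gt0)).
rewrite mulf_eq0 subr_eq0; apply/orP; right; apply/eqP.
exact: derive2C.
Qed.
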